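(* Let $A\in\mathbb{R}^{n\times n}$ and $C_i\in\mathbb{R}^{s_i\times n}$, $i\in\{1,\dots,m\}$, be such that $(C,A)$ is observable, where $C=\begin{bmatrix}C_1^\top&\cdots&C_m^\top\end{bmatrix}^\top$, and suppose the neighbor graph $\mathbb{N}$ is strongly connected. Let $\tilde A=I_m\otimes A$, $B_i=b_i\otimes I_n$ ($b_i$ the $i$-th unit vector of $\mathbb{R}^m$), $C_{ii}=C_iB_i^\top$, and $C_{ij}=c_{ij}\otimes I_n$ for $j\in\mathcal{N}_i$, $j\neq i$, where $c_{ij}\in\mathbb{R}^{1\times m}$ has entry $-1$ in position $i$, $+1$ in position $j$ and zeros elsewhere. Then the multi-channel system $$\dot\epsilon=\tilde A\epsilon+\sum_{i=1}^m\sum_{j\in\mathcal{N}_i}B_iu_{ij},\qquad y_{ij}=C_{ij}\epsilon,\quad ij\in\mathcal{I}=\{ij:i\in\{1,\dots,m\},\ j\in\mathcal{N}_i\},$$ in which channel $ij$ has input matrix $B_i$ and output matrix $C_{ij}$, is jointly controllable and jointly observable.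
   Context: Agents $1,\dots,m$ have neighbor sets $\mathcal{N}_i\ni i$; the neighbor graph $\mathbb{N}$ is the directed graph on $\{1,\dots,m\}$ with an arc from $j$ to $i$ whenever $j\in\mathcal{N}_i$, $j\neq i$, and $c_{ij}$ is the row of the transpose of its incidence matrix corresponding to that arc. A multi-channel system is jointly controllable (resp. jointly observable) if the pair consisting of $\tilde A$ and the block row of all input matrices is controllable (resp. the block column of all output matrices together with $\tilde A$ is observable). *)

From mathcomp Require Import all_boot all_order all_algebra.
From mathcomp Require Export mxtens.
Set Implicit Arguments. Unset Strict Implicit. Unset Printing Implicit Defensive.
Import GRing.Theory Num.Theory.
Local Open Scope ring_scope.

Section Defs.
Variable R : fieldType.

Fixpoint ctrbk (N q : nat) (A : 'M[R]_N) (B : 'M[R]_(N, q)) (k : nat)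
  : 'M[R]_(N, k * q) :=
  match k return 'M[R]_(N, k * q) with
  | 0 => 0
  | k'.+1 => row_mx B (A *m ctrbk A B k')
  end.

Fixpoint obsvk (N p : nat) (C : 'M[R]_(p, N)) (A : 'M[R]_N) (k : nat)
  : 'M[R]_(k * p, N) :=
  match k return 'M[R]_(k * p, N) with
  | 0 => 0
  | k'.+1 => col_mx C (obsvk C A k' *m A)
  end.

Definition controllable (N q : nat) (A : 'M[R]_N) (B : 'M[R]_(N, q)) : bool :=
  \rank (ctrbk A B N) == N.

Definition observable (N p : nat) (C : 'M[R]_(p, N)) (A : 'M[R]_N) : bool :=
  \rank (obsvk C A N) == N.

Fixpoint blockrow (N : nat) (l : seq {q : nat & 'M[R]_(N, q)})
  : 'M[R]_(N, sumn (map tag l)) :=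
  match l return 'M[R]_(N, sumn (map tag l)) with
  | [::] => 0
  | x :: l' => row_mx (tagged x) (blockrow l')
  end.

Fixpoint blockcol (N : nat) (l : seq {p : nat & 'M[R]_(p, N)})
  : 'M[R]_(sumn (map tag l), N) :=
  match l return 'M[R]_(sumn (map tag l), N) with
  | [::] => 0
  | x :: l' => col_mx (tagged x) (blockcol l')
  end.

Section System.
Variables (m n : nat) (A : 'M[R]_n) (s : 'I_m -> nat) (Cs : forall i, 'M[R]_(s i, n))
  (Nb : 'I_m -> {set 'I_m}).

Definition Cstack : 'M[R]_(_, n) := blockcol [seq Tagged (fun p => 'M[R]_(p, n)) (Cs i) | i <- enum 'I_m].

Definition Atil : 'M[R]_(m * n) := (1%:M : 'M[R]_m) *t A.

Definition bvec (i : 'I_m) : 'M[R]_(m, 1) := delta_mx i 0.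

Definition Bi (i : 'I_m) : 'M[R]_(m * n, n) :=
  castmx (erefl, mul1n n) (bvec i *t (1%:M : 'M[R]_n)).

Definition cvec (i j : 'I_m) : 'rV[R]_m := delta_mx 0 j - delta_mx 0 i.

Definition Cij (i j : 'I_m) : {p : nat & 'M[R]_(p, m * n)} :=
  if j == i then Tagged (fun p => 'M[R]_(p, m * n)) (Cs i *m (Bi i)^T)
  else Tagged (fun p => 'M[R]_(p, m * n)) (cvec i j *t (1%:M : 'M[R]_n)).

Definition channels : seq ('I_m * 'I_m) :=
  [seq (i, j) | i <- enum 'I_m, j <- [seq j <- enum 'I_m | j \in Nb i]].

Definition Bjoint : 'M[R]_(m * n, _) :=
  blockrow [seq Tagged (fun q => 'M[R]_(m * n, q)) (Bi ij.1) | ij <- channels].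

Definition Cjoint : 'M[R]_(_, m * n) :=
  blockcol [seq Cij ij.1 ij.2 | ij <- channels].

Definition nbr_arc : rel 'I_m := fun j i => (j \in Nb i) && (j != i).

Definition strongly_connected : Prop := forall i j : 'I_m, connect nbr_arc i j.

End System.
End Defs.

(** The channels [ii] have input matrices [B_i], and the block row of the
    [B_i] is the identity of [R^(mn)]: the joint input matrix already has full
    row rank, so the pair is controllable.  For observability, split an unobservable state
    [e] into its blocks [e_1, ..., e_m]; the blocks of [(I_m (x) A)^t e] are the
    [A^t e_i].  The output [c_ij (x) I_n] of a channel [ij] with [j <> i] is
    [e_j - e_i], so all blocks agree along the arcs of the neighbor graph, and
    hence everywhere by strong connectivity.  The self channels then give
    [C_i A^t e_1 = 0] for all [i] and [t], and [e_1 = 0] by observability of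
    [(C, A)]. *)

From mathcomp Require Import all_boot all_order all_algebra.
Set Implicit Arguments. Unset Strict Implicit. Unset Printing Implicit Defensive.
Import GRing.Theory.
Local Open Scope ring_scope.

Section Kalman.
Variable R : fieldType.

Lemma row_free_mul_eq0P N p (M : 'M[R]_(N, p)) :
  reflect (forall u : 'rV_N, u *m M = 0 -> u = 0) (row_free M).
Proof.
apply: (iffP idP) => [freeM u /eqP | uM0].
  by rewrite mulmx_free_eq0 // => /eqP.
rewrite -kermx_eq0; apply/eqP/row_matrixP => i; rewrite row0; apply: uM0.
exact/sub_kermxP/row_sub.
Qed.

Lemma full_col_rankP p N (M : 'M[R]_(p, N)) :
  reflect (forall v : 'cV_N, M *m v = 0 -> v = 0) (\rank M == N).
Proof.
rewrite -mxrank_tr.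
apply: (iffP (row_free_mul_eq0P M^T)) => [Mt_inj v Mv0 | M_inj u uMt0].
  by apply: trmx_inj; rewrite trmx0; apply: Mt_inj; rewrite -trmx_mul Mv0 trmx0.
by apply: trmx_inj; rewrite trmx0; apply: M_inj; rewrite -[M]trmxK -trmx_mul uMt0 trmx0.
Qed.

Lemma row_free_row_mx N p q (B : 'M[R]_(N, p)) (X : 'M[R]_(N, q)) :
  row_free B -> row_free (row_mx B X).
Proof.
case/row_freeP=> B' BB'; apply/row_freeP; exists (col_mx B' 0).
by rewrite mul_row_col mulmx0 addr0.
Qed.

Lemma row_free_controllable N q (A : 'M[R]_N) (B : 'M[R]_(N, q)) :
  row_free B -> controllable A B.
Proof.
rewrite /controllable; case: N A B => [|N] A B freeB.
  by rewrite -leqn0 rank_leq_row.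
exact: row_free_row_mx.
Qed.

Lemma mul_obsvk_eq0 N p (C : 'M[R]_(p, N)) (A : 'M[R]_N) k (v : 'cV_N) :
  obsvk C A k *m v = 0 <-> forall t, (t < k)%N -> C *m iter t (mulmx A) v = 0.
Proof.
elim: k v => [|k IHk] v /=; first by split=> // _; rewrite mul0mx.
rewrite mul_col_mx -mulmxA; split.
  move/eqP; rewrite col_mx_eq0 => /andP[/eqP Cv0 /eqP/IHk CAv0] [|t] lt_t_k //.
  by rewrite iterSr; apply: CAv0.
move=> CAv0; apply/eqP; rewrite col_mx_eq0 (CAv0 0%N) // eqxx /=.
by apply/eqP/IHk => t lt_t_k; rewrite -iterSr; apply: CAv0.
Qed.

Lemma observableP N p (C : 'M[R]_(p, N)) (A : 'M[R]_N) :
  reflect (forall v : 'cV_N,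
             (forall t, (t < N)%N -> C *m iter t (mulmx A) v = 0) -> v = 0)
          (observable C A).
Proof.
apply: (iffP (full_col_rankP _)) => [obs v /mul_obsvk_eq0 | obs v /mul_obsvk_eq0];
  exact: obs.
Qed.

Lemma mul_blockrow_eq0 N (T : eqType) (l : seq T) (f : T -> {q : nat & 'M[R]_(N, q)})
    (u : 'rV_N) :
  u *m blockrow (map f l) = 0 -> forall x, x \in l -> u *m tagged (f x) = 0.
Proof.
elim: l => [|y l IHl] //=; rewrite mul_mx_row => /eqP.
rewrite row_mx_eq0 => /andP[/eqP uf0 /eqP/IHl ul0] x.
by rewrite inE => /predU1P[-> | /ul0].
Qed.

Lemma mul_blockcol_eq0 N (T : eqType) (l : seq T) (f : T -> {p : nat & 'M[R]_(p, N)})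
    (v : 'cV_N) :
  blockcol (map f l) *m v = 0 <-> forall x, x \in l -> tagged (f x) *m v = 0.
Proof.
elim: l => [|y l IHl] /=; first by split=> // _; rewrite mul0mx.
rewrite mul_col_mx; split.
  move/eqP; rewrite col_mx_eq0 => /andP[/eqP fv0 /eqP/IHl lv0] x.
  by rewrite inE => /predU1P[-> | /lv0].
move=> lv0; apply/eqP; rewrite col_mx_eq0 lv0 ?mem_head // eqxx /=.
by apply/eqP/IHl => x lx; apply: lv0; rewrite inE lx orbT.
Qed.

End Kalman.

Section BlockVectors.
Variables (R : fieldType) (m n : nat).

Definition vblock (X : 'cV[R]_(m * n)) (i : 'I_m) : 'cV[R]_n :=
  \col_k X (mxtens_index (i, k)) 0.

Lemma vblocks_eq0 X : (forall i, vblock X i = 0) -> X = 0.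
Proof.
move=> X0; apply/matrixP => r c; rewrite [c]ord1; case: (mxtens_indexP r) => i k.
by move: (X0 i) => /matrixP/(_ k 0); rewrite !mxE.
Qed.

Lemma sum_mxtens_index (F : 'I_(m * n) -> R) :
  \sum_r F r = \sum_(i < m) \sum_(k < n) F (mxtens_index (i, k)).
Proof.
rewrite pair_big /= (reindex (@mxtens_index m n)) /=; first by apply: eq_bigr => -[].
by exists (@mxtens_unindex m n) => x _; rewrite (mxtens_indexK, mxtens_unindexK).
Qed.

Lemma vblock_Atil (A : 'M[R]_n) X i : vblock (Atil m A *m X) i = A *m vblock X i.
Proof.
apply/matrixP => k c; rewrite [c]ord1 !mxE sum_mxtens_index (bigD1 i) //=.
rewrite [X in _ + X]big1 ?addr0 => [|j ji]; last first.
  by apply: big1 => l _; rewrite tensmxE !mxE eq_sym (negbTE ji) !mul0r.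
by apply: eq_bigr => l _; rewrite tensmxE !mxE eqxx mul1r.
Qed.

Lemma vblock_iter_Atil (A : 'M[R]_n) X i t :
  vblock (iter t (mulmx (Atil m A)) X) i = iter t (mulmx A) (vblock X i).
Proof. by elim: t => //= t IHt; rewrite vblock_Atil IHt. Qed.

Lemma BiE (i j : 'I_m) (l k : 'I_n) :
  Bi R n i (mxtens_index (j, l)) k = ((j == i) && (l == k))%:R.
Proof.
rewrite castmxE cast_ord_id.
have -> : cast_ord (esym (mul1n n)) k = mxtens_index (ord0, k).
  by apply: val_inj; rewrite /= mul0n add0n.
by rewrite tensmxE !mxE andbT -natrM mulnb.
Qed.

Lemma trBi_mul X i : (Bi R n i)^T *m X = vblock X i.
Proof.
apply/matrixP => k c; rewrite [c]ord1 !mxE sum_mxtens_index (bigD1 i) //=.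
rewrite [X in _ + X]big1 ?addr0 => [|j ji]; last first.
  by apply: big1 => l _; rewrite !mxE BiE (negbTE ji) mul0r.
rewrite (bigD1 k) //= [X in _ + X]big1 ?addr0 => [|l lk]; last first.
  by rewrite !mxE BiE (negbTE lk) andbF mul0r.
by rewrite !mxE BiE !eqxx mul1r.
Qed.

Lemma tens_rV1_mulE (c : 'rV[R]_m) X k :
  ((c *t (1%:M : 'M[R]_n)) *m X) (mxtens_index (ord0, k)) 0
  = \sum_a c 0 a * vblock X a k 0.
Proof.
rewrite !mxE sum_mxtens_index; apply: eq_bigr => a _.
rewrite (bigD1 k) //= [X in _ + X]big1 ?addr0 => [|l lk]; last first.
  by rewrite tensmxE !mxE eq_sym (negbTE lk) mulr0 mul0r.
by rewrite tensmxE !mxE eqxx mulr1.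
Qed.

Lemma cvec_tens_mul_eq0 X i j :
  (cvec R i j *t (1%:M : 'M[R]_n)) *m X = 0 -> vblock X j = vblock X i.
Proof.
have pick_delta b (F : 'I_m -> R) : \sum_a ('e_b : 'rV[R]_m) 0 a * F a = F b.
  rewrite (bigD1 b) //= big1 ?addr0 => [|a ab]; first by rewrite mxE !eqxx mul1r.
  by rewrite mxE (negbTE ab) mul0r.
move=> cX0; apply/matrixP => k c; rewrite [c]ord1.
have /matrixP/(_ (mxtens_index (ord0, k)) 0) := cX0.
rewrite tens_rV1_mulE mxE /cvec.
under eq_bigr do rewrite [_ 0 _]mxE mulrDl [(- _ : 'rV_m) 0 _]mxE mulNr.
by rewrite big_split sumrN /= !pick_delta => /eqP; rewrite subr_eq0 => /eqP.
Qed.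

End BlockVectors.

Section NetworkedSystem.
Variables (R : fieldType) (m n : nat) (A : 'M[R]_n).
Variables (s : 'I_m -> nat) (Cs : forall i : 'I_m, 'M[R]_(s i, n)).
Variable Nb : 'I_m -> {set 'I_m}.
Hypothesis Nb_refl : forall i : 'I_m, i \in Nb i.

Lemma mem_channels i j : j \in Nb i -> (i, j) \in channels Nb.
Proof.
move=> ij; apply/allpairsPdep; exists i, j.
by rewrite mem_enum mem_filter ij mem_enum.
Qed.

Lemma Bjoint_row_free : row_free (Bjoint R n Nb).
Proof.
apply/row_free_mul_eq0P => u uB0; apply: trmx_inj; rewrite trmx0.
apply: vblocks_eq0 => i; rewrite -trBi_mul -trmx_mul.
by rewrite (mul_blockrow_eq0 uB0 (mem_channels (Nb_refl i))) trmx0.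
Qed.

Lemma mul_Cjoint_eq0 (X : 'cV[R]_(m * n)) i j :
  Cjoint Cs Nb *m X = 0 -> j \in Nb i -> tagged (Cij Cs i j) *m X = 0.
Proof. by move/mul_blockcol_eq0 => CX0 /mem_channels; apply: CX0. Qed.

Lemma Cjoint_kernel_vblock_arc (X : 'cV[R]_(m * n)) i j :
  Cjoint Cs Nb *m X = 0 -> nbr_arc Nb j i -> vblock X j = vblock X i.
Proof.
move=> CX0 /andP[ji neq_ji]; apply: cvec_tens_mul_eq0.
by have := mul_Cjoint_eq0 CX0 ji; rewrite /Cij (negbTE neq_ji).
Qed.

Lemma Cjoint_kernel_vblock_const (X : 'cV[R]_(m * n)) i j :
  strongly_connected Nb -> Cjoint Cs Nb *m X = 0 -> vblock X i = vblock X j.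
Proof.
move=> sc CX0.
have closed_j : closed (nbr_arc Nb) [pred k | vblock X k == vblock X j].
  by move=> k l /(Cjoint_kernel_vblock_arc CX0); rewrite !inE => ->.
by have := closed_connect closed_j (sc i j); rewrite !inE eqxx => /eqP.
Qed.

Lemma Cjoint_kernel_self (X : 'cV[R]_(m * n)) i :
  Cjoint Cs Nb *m X = 0 -> Cs i *m vblock X i = 0.
Proof.
by move/mul_Cjoint_eq0/(_ (Nb_refl i)); rewrite /Cij eqxx /= -mulmxA trBi_mul.
Qed.

Lemma Cjoint_observable :
  observable (Cstack Cs) A -> strongly_connected Nb ->
  observable (Cjoint Cs Nb) (Atil m A).
Proof.
move=> /observableP obsCA sc; apply/observableP => v unobs_v.
apply: vblocks_eq0 => i; apply: obsCA => t lt_t_n.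
have lt_t_mn : (t < m * n)%N.
  by rewrite (leq_trans lt_t_n) // leq_pmull // (leq_trans (ltn0Sn i) (ltn_ord i)).
rewrite /Cstack; apply/mul_blockcol_eq0 => k _ /=.
have v_ker : Cjoint Cs Nb *m v = 0 := unobs_v 0%N (leq_ltn_trans (leq0n t) lt_t_mn).
rewrite (Cjoint_kernel_vblock_const _ k sc v_ker).
by rewrite -vblock_iter_Atil Cjoint_kernel_self // unobs_v.
Qed.

End NetworkedSystem.

Theorem lemma4 (R : realFieldType) (m n : nat) (A : 'M[R]_n)
  (s : 'I_m -> nat) (Cs : forall i : 'I_m, 'M[R]_(s i, n))
  (Nb : 'I_m -> {set 'I_m}) :
  (forall i : 'I_m, i \in Nb i) ->
  observable (Cstack Cs) A ->
  strongly_connected Nb ->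
  controllable (Atil m A) (Bjoint R n Nb) /\ observable (Cjoint Cs Nb) (Atil m A).
Proof.
move=> Nb_refl obsCA sc; split.
  exact/row_free_controllable/Bjoint_row_free.
exact: Cjoint_observable.
Qed.
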